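(* Let $(c_1,\dots,c_m)\in\mathbb{Z}^m$ be a quiddity cycle, with indices read cyclically modulo $m$. Then at least one of the following holds: (0) $m<4$ and $(c_1,\dots,c_m)\in\{(0,0),(1,1,1)\}$. (1) There is $k$ with $c_k=1$ such that $(c_1,\dots,c_{k-2},c_{k-1}-1,c_{k+1}-1,c_{k+2},\dots,c_m)$ is a quiddity cycle of length $m-1$. (2) $m$ is odd and there is $k$ with $c_k=0$ such that $(-c_1,\dots,-c_{k-2},-c_{k-1}-c_{k+1},-c_{k+2},\dots,-c_m)$ is a quiddity cycle of length $m-2$. (3) $m$ is even and there is $k$ with $c_k=-1$ such that $(-c_1,\dots,-c_{k-2},-c_{k-1}-1,-c_{k+1}-1,-c_{k+2},\dots,-c_m)$ is a quiddity cycle of length $m-1$. (4) There are $j,k$, not cyclically adjacent, with $c_j=c_k=0$, and the following sequence is a quiddity cycle of length $m-4$: - if $j$ and $k$ are at cyclic distance greater than $2$: $(c_1,\dots,c_{j-2},c_{j-1}+c_{j+1},c_{j+2},\dots,c_{k-2},c_{k-1}+c_{k+1},c_{k+2},\dots,c_m)$; - if (after possibly swapping $j,k$) $j+1=k-1$: $(c_1,\dots,c_{j-2},c_{j-1}+c_{j+1}+c_{k+1},c_{k+2},\dots,c_m)$. (5) There are $j,k$, not cyclically adjacent, with $c_j=c_k=-1$, and the following sequence is a quiddity cycle of length $m-2$: - if $j$ and $k$ are at cyclic distance greater than $2$: $(c_1,\dots,c_{j-2},c_{j-1}+1,c_{j+1}+1,c_{j+2},\dots,c_{k-2},c_{k-1}+1,c_{k+1}+1,c_{k+2},\dots,c_m)$;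 - if (after possibly swapping $j,k$) $j+1=k-1$: $(c_1,\dots,c_{j-2},c_{j-1}+1,c_{j+1}+2,c_{k+1}+1,c_{k+2},\dots,c_m)$.
   Context: $\eta(c)=\begin{pmatrix}c&-1\\1&0\end{pmatrix}$. A quiddity cycle over $\mathbb{Z}$ is $(c_1,\dots,c_m)\in\mathbb{Z}^m$ with $\eta(c_1)\cdots\eta(c_m)=-I$. *)

From HB Require Import structures.
From mathcomp Require Import all_boot all_order all_algebra.
Set Implicit Arguments. Unset Strict Implicit. Unset Printing Implicit Defensive.
Import Order.TTheory GRing.Theory Num.Theory.
Local Open Scope ring_scope.

Definition eta (c : int) : 'M[int]_2 :=
  \matrix_(i < 2, j < 2)
    (if (i == 0 :> nat) then (if (j == 0 :> nat) then c else -1)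
     else (if (j == 0 :> nat) then 1 else 0)).

Definition quiddity_cycle (s : seq int) : Prop :=
  \prod_(x <- s) eta x = - 1%:M.

(* Three consecutive entries a, v, b with v in {1, 0, -1} can be merged:
   eta a eta 1 eta b = eta (a - 1) eta (b - 1),  eta a eta 0 eta b = - eta (a + b)
   and  eta a eta (-1) eta b = - eta (a + 1) eta (b + 1).  Negating every entry
   conjugates each eta by diag(1, -1) and changes its sign, which repairs the
   sign in the last two moves when the length has the right parity.  When no
   such single move applies, every entry other than v (v = 0 for even length,
   v = -1 for odd length) has absolute value at least 2.  Over such a stretch
   the top-left entry of the product of the eta's dominates the bottom-left one
   and exceeds the length, so a quiddity cycle must contain v at two
   non-adjacent places (the small lengths are settled by direct computation),
   and both occurrences can then be merged at once. *)

From Pilot Require Import Defs.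
From HB Require Import structures.
From mathcomp Require Import all_boot all_order all_algebra.
From mathcomp Require Import ring lra zify.
Import Order.TTheory GRing.Theory Num.Theory.
(* [HB.structures] also exports a constant named [eta]. *)
Import Defs.
Set Implicit Arguments. Unset Strict Implicit. Unset Printing Implicit Defensive.
Local Open Scope ring_scope.

Section Matrix2.
Variable R : pzRingType.

Definition mx2 (a b c d : R) : 'M[R]_2 :=
  \matrix_(i < 2, j < 2) if i == 0 then (if j == 0 then a else b)
                         else (if j == 0 then c else d).

Lemma mx2K (A : 'M[R]_2) : A = mx2 (A 0 0) (A 0 1) (A 1 0) (A 1 1).
Proof.
apply/matrixP => i j; rewrite mxE.
by case: i j => [[|[|//]] ?] [[|[|//]] ?] /=; congr (A _ _); apply: val_inj.
Qed.

Lemma mx2_inj a b c d a' b' c' d' : mx2 a b c d = mx2 a' b' c' d' ->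
  [/\ a = a', b = b', c = c' & d = d'].
Proof.
move=> /matrixP e.
by split; [move: (e 0 0) | move: (e 0 1) | move: (e 1 0) | move: (e 1 1)]; rewrite !mxE.
Qed.

Lemma mulmx2 a b c d a' b' c' d' : mx2 a b c d * mx2 a' b' c' d' =
  mx2 (a * a' + b * c') (a * b' + b * d') (c * a' + d * c') (c * b' + d * d').
Proof.
apply/matrixP => i j; rewrite -mulmxE !mxE !big_ord_recl big_ord0 addr0 !mxE.
by case: i j => [[|[|//]] ?] [[|[|//]] ?].
Qed.

Lemma oppmx2 a b c d : - mx2 a b c d = mx2 (- a) (- b) (- c) (- d).
Proof. by apply/matrixP => i j; rewrite !mxE; case: ifP; case: ifP. Qed.

Lemma mx2_1 : 1 = mx2 1 0 0 1.
Proof. by apply/matrixP => i j; rewrite !mxE; case: i j => [[|[|//]] ?] [[|[|//]] ?]. Qed.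

End Matrix2.

Lemma mulmx_N1C (R : comNzRingType) n (A B : 'M[R]_n.+1) : A * B = -1 -> B * A = -1.
Proof.
move=> AB; apply/eqP; rewrite -eqr_oppLR -mulrN; apply/eqP/mulmx1C.
by rewrite mulmxE mulNr AB opprK.
Qed.

Lemma eta_mx2 x : eta x = mx2 x (-1) 1 0.
Proof. by apply/matrixP => i j; rewrite !mxE; case: i j => [[|[|//]] ?] [[|[|//]] ?]. Qed.

Ltac mx2_ring :=
  rewrite ?eta_mx2 ?mx2_1 ?(mulmx2, oppmx2); congr mx2; ring.

Lemma eta_1 a b : eta a * eta 1 * eta b = eta (a - 1) * eta (b - 1).
Proof. mx2_ring. Qed.
Lemma eta_0 a b : eta a * eta 0 * eta b = - eta (a + b).
Proof. mx2_ring. Qed.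
Lemma eta_N1 a b : eta a * eta (-1) * eta b = - (eta (a + 1) * eta (b + 1)).
Proof. mx2_ring. Qed.
Lemma eta_0_0 a b e : eta a * eta 0 * eta b * eta 0 * eta e = eta (a + b + e).
Proof. mx2_ring. Qed.
Lemma eta_N1_N1 a b e :
  eta a * eta (-1) * eta b * eta (-1) * eta e = eta (a + 1) * eta (b + 2) * eta (e + 1).
Proof. mx2_ring. Qed.

Lemma quiddity_cycleE s : quiddity_cycle s <-> \prod_(x <- s) eta x = -1.
Proof. by []. Qed.

Lemma prod_eta_cat s t :
  \prod_(x <- s ++ t) eta x = \prod_(x <- s) eta x * \prod_(x <- t) eta x.
Proof. exact: big_cat. Qed.

Lemma prod_eta3 a v b s :
  \prod_(x <- [:: a, v, b & s]) eta x = eta a * eta v * eta b * \prod_(x <- s) eta x.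
Proof. by rewrite !big_cons !mulrA. Qed.

Lemma quiddity_cycle_rot r c : quiddity_cycle c -> quiddity_cycle (rot r c).
Proof.
rewrite !quiddity_cycleE /rot prod_eta_cat => qc; apply: mulmx_N1C.
by rewrite -prod_eta_cat cat_take_drop.
Qed.

Local Notation S := (mx2 1 0 0 (-1) : 'M[int]_2).

Lemma eta_opp x : eta (- x) = - (S * eta x * S).
Proof. mx2_ring. Qed.

Lemma S_involutive : S * S = 1.
Proof. by rewrite mulmx2 mx2_1; congr mx2; ring. Qed.

Lemma prod_eta_opp s : \prod_(x <- [seq - x | x <- s]) eta x =
  (-1) ^+ size s *: (S * \prod_(x <- s) eta x * S).
Proof.
elim: s => [|x s IH]; first by rewrite !big_nil scale1r mulr1 S_involutive.
rewrite /= !big_cons IH eta_opp -scalerAr exprS mulN1r scaleNr mulNr.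
by rewrite !mulrA -(mulrA _ S S) S_involutive mulr1 scalerN.
Qed.

Lemma quiddity_cycle_opp s : \prod_(x <- s) eta x = 1 -> odd (size s) ->
  quiddity_cycle [seq - x | x <- s].
Proof.
move=> prod1 odd_s; apply/quiddity_cycleE.
by rewrite prod_eta_opp prod1 mulr1 S_involutive -signr_odd odd_s scaleN1r.
Qed.

Lemma continuant_step (x p q : int) (n : nat) :
  2 <= `|x| -> n%:Z + 1 <= `|p| -> `|q| < `|p| ->
  n.+1%:Z + 1 <= `|x * p - q| /\ `|p| < `|x * p - q|.
Proof. by move=> *; split; nia. Qed.

Lemma prod_eta_growth t : {in t, forall x, 2 <= `|x|} ->
  let A := \prod_(x <- t) eta x in (size t)%:Z + 1 <= `|A 0 0| /\ `|A 1 0| < `|A 0 0|.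
Proof.
elim: t => [|x t IH] large /=; first by rewrite big_nil mx2_1 !mxE.
have /IH [grow dom] : {in t, forall y, 2 <= `|y|}.
  by move=> y ty; apply: large; rewrite inE ty orbT.
rewrite big_cons (mx2K (\prod_(y <- t) eta y)) eta_mx2 mulmx2 !mxE /= mulN1r mul1r mul0r addr0.
exact: continuant_step (large x (mem_head x t)) grow dom.
Qed.

Lemma not_quiddity_cycle_large_tail x t :
  {in t, forall y, 2 <= `|y|} -> ~ quiddity_cycle (x :: t).
Proof.
move=> /prod_eta_growth /= [grow _].
rewrite quiddity_cycleE big_cons; move: (\prod_(y <- t) eta y) grow => A grow.
rewrite (mx2K A) eta_mx2 mulmx2 mx2_1 oppmx2 => /mx2_inj [_ _ + _].
(* Matrix entries have type [(fun=> int) _]; naming them lets [lia] see integers. *)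
by move: grow; set p := A 0 0; set q := A 1 0; lia.
Qed.

Lemma not_quiddity_cycle_large c : {in c, forall y, 2 <= `|y|} -> ~ quiddity_cycle c.
Proof.
case: c => [_|x t large]; first by rewrite quiddity_cycleE big_nil mx2_1 oppmx2 => /mx2_inj [].
by apply: not_quiddity_cycle_large_tail => y yt; apply: large; rewrite inE yt orbT.
Qed.

Lemma not_quiddity_cycle_adjacent v t : v = 0 \/ v = -1 -> t != [::] ->
  {in t, forall y, 2 <= `|y|} -> ~ quiddity_cycle [:: v, v & t].
Proof.
case: t => [//|y t] v01 _ /prod_eta_growth /= [grow _].
rewrite quiddity_cycleE 2!big_cons mulrA; move: (\prod_(z <- y :: t) eta z) grow => A grow.
rewrite (mx2K A) eta_mx2 !mulmx2 mx2_1 oppmx2 => /mx2_inj [].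
move: grow; set p := A 0 0; set q := A 0 1; set r := A 1 0; set s := A 1 1.
by case: v01 => ->; nia.
Qed.

Lemma not_quiddity_cycle_triple v : v = 0 \/ v = -1 -> ~ quiddity_cycle [:: v; v; v].
Proof.
rewrite quiddity_cycleE !big_cons big_nil mulr1 eta_mx2 !mulmx2 mx2_1 oppmx2.
by case=> -> /mx2_inj [].
Qed.

Lemma quiddity_cycle4 w x y z : quiddity_cycle [:: w; x; y; z] -> x * y = 2.
Proof.
rewrite quiddity_cycleE !big_cons big_nil mulr1 !eta_mx2 !mulmx2 mx2_1 oppmx2.
by move=> /mx2_inj [_ _ _]; lia.
Qed.

Lemma quiddity_cycle_small c : quiddity_cycle c -> (size c < 3)%N -> c = [:: 0; 0].
Proof.
case: c => [|x [|y [|z t]]] //; rewrite quiddity_cycleE ?big_cons big_nil ?mulr1.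
- by rewrite mx2_1 oppmx2 => /mx2_inj [].
- by rewrite eta_mx2 mx2_1 oppmx2 => /mx2_inj [].
- by rewrite !eta_mx2 mulmx2 mx2_1 oppmx2 => /mx2_inj [? ? ? ?] _; congr [:: _; _]; lia.
Qed.

Lemma quiddity_cycle4_unit c : quiddity_cycle c -> size c = 4%N -> (1 \in c) || (-1 \in c).
Proof.
case: c => [|w [|x [|y [|z [|? ?]]]]] // /quiddity_cycle4 xy _.
have : [|| x == 1, x == -1, y == 1 | y == -1] by nia.
by rewrite !inE; case/or4P=> /eqP->; rewrite eqxx ?orbT.
Qed.

Section Rotation.
Variable T : eqType.
Implicit Types (x : T) (c s t : seq T).

Definition is_rot c (d : seq T) := exists r, rot r c = d.

Lemma is_rot_trans c (d e : seq T) : is_rot c d -> is_rot d e -> is_rot c e.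
Proof. by case=> r <- [k <-]; exists (rot_add c r k); rewrite rot_rot_add. Qed.

Lemma is_rot_refl c : is_rot c c.
Proof. by exists 0%N; rewrite rot0. Qed.

Lemma is_rot_rot k c : is_rot c (rot k c).
Proof. by exists k. Qed.

Lemma is_rot_rotr k c : is_rot c (rotr k c).
Proof. by exists (size c - k)%N. Qed.

Lemma is_rot_mem c (d : seq T) : is_rot c d -> d =i c.
Proof. by case=> r <-; apply: mem_rot. Qed.

Lemma is_rot_size c (d : seq T) : is_rot c d -> size d = size c.
Proof. by case=> r <-; apply: size_rot. Qed.

Lemma is_rot_cons x c : x \in c -> exists t, is_rot c (x :: t).
Proof. by case/splitPr=> s t; exists (t ++ s), (size s); rewrite rot_size_cat. Qed.

Lemma is_rot_around x c : x \in c -> (3 <= size c)%N ->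
  exists a b s, is_rot c [:: a, x, b & s].
Proof.
case/is_rot_cons=> t ct; rewrite -(is_rot_size ct).
case: t ct => [|b t] // ct; case/lastP: t ct => [|s a] // ct _.
exists a, b, s; apply: is_rot_trans ct _.
by have := is_rot_rotr 1 (rcons [:: x, b & s] a); rewrite rotr1_rcons.
Qed.

Lemma is_rot_two_apart x t1 t2 : t1 != [::] -> t2 != [::] -> (size t1 + size t2 != 2)%N ->
  (exists a b d e s1 s2, is_rot (x :: t1 ++ x :: t2) ([:: a, x, b & s1] ++ [:: d, x, e & s2]))
  \/ (exists a b e s, is_rot (x :: t1 ++ x :: t2) [:: a, x, b, x, e & s]).
Proof.
case: t1 => [//|b t1] _; case: t2 => [//|e t2] _.
case/lastP: t1 => [|s1 d]; case/lastP: t2 => [|s2 a] //= size_ne2.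
- right; exists a, b, e, s2.
  by have := is_rot_rotr 1 (rcons [:: x, b, x, e & s2] a); rewrite rotr1_rcons.
- right; exists d, e, b, s1.
  have := is_rot_rot (size [:: x, b & s1]) ([:: x, b & s1] ++ [:: d; x; e]).
  by rewrite rot_size_cat -cats1 -catA.
- left; exists a, b, d, e, s1, s2.
  have := is_rot_rotr 1 (rcons ([:: x, b & s1] ++ [:: d, x, e & s2]) a).
  by rewrite rotr1_rcons rcons_cat cat_rcons.
Qed.

End Rotation.

Lemma quiddity_cycle_is_rot c d : quiddity_cycle c -> is_rot c d -> quiddity_cycle d.
Proof. by move=> qc [r <-]; apply: quiddity_cycle_rot. Qed.

Lemma quiddity_cycle_two_apart v c :
  v = 0 \/ v = -1 -> quiddity_cycle c -> (3 <= size c)%N ->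
  {in c, forall x, x != v -> 2 <= `|x|} ->
  exists t1 t2, [/\ t1 != [::], t2 != [::] & is_rot c (v :: t1 ++ v :: t2)].
Proof.
move=> v01 qc c3 large_c.
have large d (u : seq int) :
    is_rot c d -> {subset u <= d} -> v \notin u -> {in u, forall x, 2 <= `|x|}.
  move=> cd ud vu x ux; apply: large_c; first by rewrite -(is_rot_mem cd) ud.
  by apply: contraNneq vu => <-.
have [vc|vc] := boolP (v \in c); last first.
  by have /not_quiddity_cycle_large := large c c (is_rot_refl c) (fun _ => id) vc.
(* Rotate c to v :: b :: m ++ [:: a]; a v inside m gives the pair, the other
   placements of v are excluded by the obstructions above, except a = b = v. *)
have [t ct] := is_rot_cons vc; have qt := quiddity_cycle_is_rot qc ct.
move: c3; rewrite -(is_rot_size ct).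
case: t ct qt => [|b t] // ct qt; case/lastP: t ct qt => [|m a] // ct qt _.
have [vm|vm] := boolP (v \in m).
  case/splitPr: vm ct {qt} => m1 m2; rewrite rcons_cat => ct.
  by exists (b :: m1), (rcons m2 a); split=> //; rewrite -size_eq0 size_rcons.
case: (eqVneq b v) ct qt => [->|bv]; case: (eqVneq a v) => [->|av] ct qt.
- case: m vm ct qt => [|x m] vm ct qt; first by case: (not_quiddity_cycle_triple v01 qt).
  exists (x :: m), [:: v]; split=> //; apply: is_rot_trans ct _.
  by have := is_rot_rot 1 [:: v, v, x & rcons m v]; rewrite rot1_cons -!cats1 /= -catA.
- exfalso; apply: not_quiddity_cycle_adjacent v01 _ _ qt; first by rewrite -size_eq0 size_rcons.
  apply: large ct _ _; first by move=> y ym; rewrite !inE ym !orbT.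
  by rewrite mem_rcons inE negb_or eq_sym av.
- have {}ct : is_rot c [:: v, v, b & m].
    apply: is_rot_trans ct _; have := is_rot_rotr 1 (rcons [:: v, b & m] v).
    by rewrite rotr1_rcons.
  exfalso; apply: (not_quiddity_cycle_adjacent v01 _ _ (quiddity_cycle_is_rot qc ct)) => //.
  apply: large ct _ _; first by move=> y ym; rewrite 2!inE ym !orbT.
  by rewrite inE negb_or eq_sym bv.
- exfalso; apply: not_quiddity_cycle_large_tail qt; apply: large ct _ _ => [y yt|].
    by rewrite inE yt orbT.
  by rewrite inE negb_or eq_sym bv mem_rcons inE negb_or eq_sym av.
Qed.

Lemma quiddity_cycle_contract1 a b s :
  quiddity_cycle [:: a, 1, b & s] -> quiddity_cycle [:: a - 1, b - 1 & s].
Proof. by rewrite !quiddity_cycleE prod_eta3 eta_1 !big_cons mulrA. Qed.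

Lemma quiddity_cycle_contract0 a b s : quiddity_cycle [:: a, 0, b & s] -> ~~ odd (size s) ->
  quiddity_cycle (- a - b :: [seq - x | x <- s]).
Proof.
rewrite quiddity_cycleE prod_eta3 eta_0 mulNr => /oppr_inj prod1 even_s.
rewrite -opprD; apply: (quiddity_cycle_opp (s := a + b :: s)) => /=; last by rewrite even_s.
by rewrite big_cons.
Qed.

Lemma quiddity_cycle_contractN1 a b s : quiddity_cycle [:: a, -1, b & s] -> odd (size s) ->
  quiddity_cycle [:: - a - 1, - b - 1 & [seq - x | x <- s]].
Proof.
rewrite quiddity_cycleE prod_eta3 eta_N1 mulNr => /oppr_inj prod1 odd_s.
rewrite -!opprD; apply: (quiddity_cycle_opp (s := [:: a + 1, b + 1 & s])) => /=.
  by rewrite !big_cons mulrA.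
by rewrite odd_s.
Qed.

Lemma quiddity_cycle_contract00 a b d e s1 s2 :
  quiddity_cycle ([:: a, 0, b & s1] ++ [:: d, 0, e & s2]) ->
  quiddity_cycle ((a + b :: s1) ++ (d + e :: s2)).
Proof.
by rewrite !quiddity_cycleE !prod_eta_cat !prod_eta3 !eta_0 !(mulNr, mulrN) opprK !big_cons.
Qed.

Lemma quiddity_cycle_contract0_0 a b e s :
  quiddity_cycle [:: a, 0, b, 0, e & s] -> quiddity_cycle (a + b + e :: s).
Proof. by rewrite !quiddity_cycleE !big_cons !mulrA eta_0_0. Qed.

Lemma quiddity_cycle_contractN1N1 a b d e s1 s2 :
  quiddity_cycle ([:: a, -1, b & s1] ++ [:: d, -1, e & s2]) ->
  quiddity_cycle ([:: a + 1, b + 1 & s1] ++ [:: d + 1, e + 1 & s2]).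
Proof.
rewrite !quiddity_cycleE !prod_eta_cat !prod_eta3 !eta_N1 !(mulNr, mulrN) opprK.
by rewrite !big_cons !mulrA.
Qed.

Lemma quiddity_cycle_contractN1_N1 a b e s :
  quiddity_cycle [:: a, -1, b, -1, e & s] -> quiddity_cycle [:: a + 1, b + 2, e + 1 & s].
Proof. by rewrite !quiddity_cycleE !big_cons !mulrA eta_N1_N1. Qed.

Lemma quiddity_cycle_two_apart_rot v c : v = 0 \/ v = -1 -> quiddity_cycle c ->
  (3 <= size c)%N -> size c != 4%N -> {in c, forall x, x != v -> 2 <= `|x|} ->
  (exists r a b d e s1 s2, rot r c = [:: a, v, b & s1] ++ [:: d, v, e & s2])
  \/ (exists r a b e s, rot r c = [:: a, v, b, v, e & s]).
Proof.
move=> v01 qc c3 c4 large.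
have [t1 [t2 [t1_ne t2_ne ct]]] := quiddity_cycle_two_apart v01 qc c3 large.
have sizes : (size t1 + size t2 != 2)%N.
  by move: c4; rewrite -(is_rot_size ct) /= size_cat /=; lia.
case: (is_rot_two_apart v t1_ne t2_ne sizes) => [[a [b [d [e [s1 [s2 cr]]]]]]|[a [b [e [s cr]]]]].
- by have [r rc] := is_rot_trans ct cr; left; exists r, a, b, d, e, s1, s2.
- by have [r rc] := is_rot_trans ct cr; right; exists r, a, b, e, s.
Qed.

Lemma contraction_at1 c : quiddity_cycle c -> 1 \in c -> (3 <= size c)%N ->
  exists r a b s, rot r c = [:: a, 1, b & s] /\ quiddity_cycle [:: a - 1, b - 1 & s].
Proof.
move=> qc c1 c3; have [a [b [s [r rc]]]] := is_rot_around c1 c3.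
exists r, a, b, s; split=> //; apply: quiddity_cycle_contract1.
by rewrite -rc; apply: quiddity_cycle_rot.
Qed.

Lemma contraction_at0 c : quiddity_cycle c -> odd (size c) -> 0 \in c -> (3 <= size c)%N ->
  exists r a b s, rot r c = [:: a, 0, b & s] /\
    quiddity_cycle (- a - b :: [seq - x | x <- s]).
Proof.
move=> qc odd_c c0 c3; have [a [b [s [r rc]]]] := is_rot_around c0 c3.
exists r, a, b, s; split=> //; apply: quiddity_cycle_contract0.
  by rewrite -rc; apply: quiddity_cycle_rot.
by move: odd_c; rewrite -(size_rot r) rc /= !negbK.
Qed.

Lemma contraction_atN1 c : quiddity_cycle c -> ~~ odd (size c) -> -1 \in c -> (3 <= size c)%N ->
  exists r a b s, rot r c = [:: a, -1, b & s] /\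
    quiddity_cycle [:: - a - 1, - b - 1 & [seq - x | x <- s]].
Proof.
move=> qc even_c cN1 c3; have [a [b [s [r rc]]]] := is_rot_around cN1 c3.
exists r, a, b, s; split=> //; apply: quiddity_cycle_contractN1.
  by rewrite -rc; apply: quiddity_cycle_rot.
by move: even_c; rewrite -(size_rot r) rc /= !negbK.
Qed.

Lemma contraction_at00 c : quiddity_cycle c -> (3 <= size c)%N -> size c != 4%N ->
  {in c, forall x, x != 0 -> 2 <= `|x|} ->
  (exists r a b d e s1 s2, rot r c = [:: a, 0, b & s1] ++ [:: d, 0, e & s2] /\
     quiddity_cycle ((a + b :: s1) ++ (d + e :: s2)))
  \/ (exists r a b e s, rot r c = [:: a, 0, b, 0, e & s] /\ quiddity_cycle (a + b + e :: s)).
Proof.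
move=> qc c3 c4 large.
case: (quiddity_cycle_two_apart_rot (or_introl erefl) qc c3 c4 large).
- case=> r [a [b [d [e [s1 [s2 rc]]]]]]; left; exists r, a, b, d, e, s1, s2.
  by split=> //; apply: quiddity_cycle_contract00; rewrite -rc; apply: quiddity_cycle_rot.
- case=> r [a [b [e [s rc]]]]; right; exists r, a, b, e, s.
  by split=> //; apply: quiddity_cycle_contract0_0; rewrite -rc; apply: quiddity_cycle_rot.
Qed.

Lemma contraction_atN1N1 c : quiddity_cycle c -> (3 <= size c)%N -> size c != 4%N ->
  {in c, forall x, x != -1 -> 2 <= `|x|} ->
  (exists r a b d e s1 s2, rot r c = [:: a, -1, b & s1] ++ [:: d, -1, e & s2] /\
     quiddity_cycle ([:: a + 1, b + 1 & s1] ++ [:: d + 1, e + 1 & s2]))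
  \/ (exists r a b e s, rot r c = [:: a, -1, b, -1, e & s] /\
     quiddity_cycle [:: a + 1, b + 2, e + 1 & s]).
Proof.
move=> qc c3 c4 large.
case: (quiddity_cycle_two_apart_rot (or_intror erefl) qc c3 c4 large).
- case=> r [a [b [d [e [s1 [s2 rc]]]]]]; left; exists r, a, b, d, e, s1, s2.
  by split=> //; apply: quiddity_cycle_contractN1N1; rewrite -rc; apply: quiddity_cycle_rot.
- case=> r [a [b [e [s rc]]]]; right; exists r, a, b, e, s.
  by split=> //; apply: quiddity_cycle_contractN1_N1; rewrite -rc; apply: quiddity_cycle_rot.
Qed.

Theorem theorem6p4 (c : seq int) :
  quiddity_cycle c ->
  (* (0) *)
  ((size c < 4)%N /\ (c = [:: 0; 0] \/ c = [:: 1; 1; 1]))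
  \/
  (* (1) c_k = 1, neighbours a = c_{k-1}, b = c_{k+1} *)
  (exists (r : nat) (a b : int) (s : seq int),
     rot r c = [:: a, 1, b & s] /\
     quiddity_cycle [:: a - 1, b - 1 & s])
  \/
  (* (2) m odd, c_k = 0 *)
  (odd (size c) /\
   exists (r : nat) (a b : int) (s : seq int),
     rot r c = [:: a, 0, b & s] /\
     quiddity_cycle (- a - b :: map (fun x => - x) s))
  \/
  (* (3) m even, c_k = -1 *)
  (~~ odd (size c) /\
   exists (r : nat) (a b : int) (s : seq int),
     rot r c = [:: a, -1, b & s] /\
     quiddity_cycle [:: - a - 1, - b - 1 & map (fun x => - x) s])
  \/
  (* (4) c_j = c_k = 0, j,k not cyclically adjacent *)
  ((exists (r : nat) (a b d e : int) (s1 s2 : seq int),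
      rot r c = [:: a, 0, b & s1] ++ [:: d, 0, e & s2] /\
      quiddity_cycle ((a + b :: s1) ++ (d + e :: s2)))
   \/
   (exists (r : nat) (a b e : int) (s : seq int),
      rot r c = [:: a, 0, b, 0, e & s] /\
      quiddity_cycle (a + b + e :: s)))
  \/
  (* (5) c_j = c_k = -1, j,k not cyclically adjacent *)
  ((exists (r : nat) (a b d e : int) (s1 s2 : seq int),
      rot r c = [:: a, -1, b & s1] ++ [:: d, -1, e & s2] /\
      quiddity_cycle ([:: a + 1, b + 1 & s1] ++ [:: d + 1, e + 1 & s2]))
   \/
   (exists (r : nat) (a b e : int) (s : seq int),
      rot r c = [:: a, -1, b, -1, e & s] /\
      quiddity_cycle [:: a + 1, b + 2, e + 1 & s])).

Proof.
move=> qc; have [c_small|c3] := ltnP (size c) 3.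
  by left; split; [apply: ltnW | left; apply: quiddity_cycle_small].
have [c1|no1] := boolP (1 \in c); first by right; left; apply: contraction_at1.
have ne1 x : x \in c -> x != 1 by move=> xc; apply: contraNneq no1 => <-.
have [odd_c|even_c] := boolP (odd (size c)).
  have [c0|no0] := boolP (0 \in c); first by do 2 right; left; split; last apply: contraction_at0.
  do 5 right; apply: contraction_atN1N1 => //; first by apply: contraTneq odd_c => ->.
  move=> x xc xN1; have x0 : x != 0 by apply: contraNneq no0 => <-.
  by have := ne1 x xc; lia.
have [cN1|noN1] := boolP (-1 \in c); first by do 3 right; left; split; last apply: contraction_atN1.
do 4 right; left; apply: contraction_at00 => //.
  by apply/eqP => /(quiddity_cycle4_unit qc); rewrite (negPf no1) (negPf noN1).
move=> x xc x0; have xN1 : x != -1 by apply: contraNneq noN1 => <-.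
by have := ne1 x xc; lia.
Qed.
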